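(* Let $k\ge3$ and integers $1\le j_1$, $i_m\le j_m$ ($2\le m\le k$) with $j_m<i_{m+1}-1$ for $1\le m<k$; let $A=[1;j_1]\cup[i_2;j_2]\cup\dots\cup[i_k;j_k]$ and $n\ge j_k$. Let $B$ satisfy $[i_2;j_2]\cup\dots\cup[i_{k-1};j_{k-1}]\subseteq B\subseteq A$. Then $\Lambda_A\Lambda_B=\Lambda_B\Lambda_A$ in $U_q(\mathfrak{sl}_2)^{\otimes n}$.
   Context: Let $\mathbb{K}$ be a field and $q\in\mathbb{K}$ not a root of unity. $U_q(\mathfrak{sl}_2)$ is the associative $\mathbb{K}$-algebra with generators $E,F,K,K^{-1}$ and relations $KK^{-1}=K^{-1}K=1$, $KE=q^2EK$, $KF=q^{-2}FK$, $EF-FE=\frac{K-K^{-1}}{q-q^{-1}}$, with Casimir element $\Lambda=(q-q^{-1})^2EF+q^{-1}K+qK^{-1}$ and coproduct $\Delta(E)=E\otimes1+K\otimes E$, $\Delta(F)=F\otimes K^{-1}+1\otimes F$, $\Delta(K^{\pm1})=K^{\pm1}\otimes K^{\pm1}$. $\mathcal{I}_R$ is the subalgebra generated by $EK^{-1},F,K^{-1},\Lambda$, with algebra morphism $\tau_R:\mathcal{I}_R\to U_q(\mathfrak{sl}_2)\otimes\mathcal{I}_R$: $\tau_R(EK^{-1})=K^{-1}\otimes EK^{-1}$, $\tau_R(F)=K\otimes F-q^{-3}(q-q^{-1})^2F^2K\otimes EK^{-1}+q^{-1}(q+q^{-1})FK\otimes K^{-1}-q^{-1}FK\otimes\Lambda$,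 $\tau_R(K^{-1})=1\otimes K^{-1}-q^{-1}(q-q^{-1})^2F\otimes EK^{-1}$, $\tau_R(\Lambda)=1\otimes\Lambda$. $[i;j]=\{i,\dots,j\}$; $1^{\otimes\ell}\otimes\varphi\otimes1^{\otimes m}$ applies $\varphi$ to tensor position $\ell+1$. For $A=\{a_1<\dots<a_m\}\subseteq[1;n]$, $\Lambda_A=1^{\otimes(a_1-1)}\otimes(\mu_m\circ\cdots\circ\mu_2)(\Lambda)\otimes1^{\otimes(n-a_m)}$ with $\mu_i=(1^{\otimes(a_i-a_1-1)}\otimes\tau_R)\circ\cdots\circ(1^{\otimes(a_{i-1}-a_1+1)}\otimes\tau_R)\circ(1^{\otimes(a_{i-1}-a_1)}\otimes\Delta)$ (no $\tau_R$ factors when $a_i=a_{i-1}+1$). *)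

From HB Require Import structures.
From mathcomp Require Import all_boot all_order all_algebra.
Set Implicit Arguments. Unset Strict Implicit. Unset Printing Implicit Defensive.
Import GRing.Theory.
Local Open Scope ring_scope.

(* Tensor positions are numbered 1..n.  An element of
   U^{\otimes (p-1)} (x) I_R  (last factor at position p lying in the
   left coideal subalgebra I_R) is represented by a formal noncommutative
   expression whose atoms are U-generators (E,F,K,K^{-1}) at positions < p
   and I_R-generators (EK^{-1}, F, K^{-1}, Lambda) at position p. *)

Inductive ugen := gE | gF | gK | gKi.
Inductive igen := iX (* = E K^{-1} *) | iF | iKi | iL .

Inductive term (K : Type) :=
  | tC of K
  | tAdd of term K & term K
  | tMul of term K & term K
  | tU of nat & ugen
  | tI of nat & igen.

Arguments tU {K}. Arguments tI {K}.

Fixpoint tsubst (K : Type) (p : nat) (phi : igen -> term K) (t : term K) : term K :=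
  match t with
  | tAdd a b => tAdd (tsubst p phi a) (tsubst p phi b)
  | tMul a b => tMul (tsubst p phi a) (tsubst p phi b)
  | tI p' g => if p' == p then phi g else t
  | _ => t
  end.

Definition tSc (K : Type) (c : K) (t : term K) := tMul (tC c) t.

(* Coproduct Delta restricted to I_R, with values in U (x) I_R,
   first factor at position p, second at position p+1. *)
Definition delta_img (K : fieldType) (q : K) (p : nat) (g : igen) : term K :=
  let c := (q - q^-1) ^+ 2 in
  match g with
  | iX =>
      tAdd (tMul (tMul (tU p gE) (tU p gKi)) (tI p.+1 iKi)) (tI p.+1 iX)
  | iF =>
      tAdd (tMul (tU p gF) (tI p.+1 iKi)) (tI p.+1 iF)
  | iKi =>
      tMul (tU p gKi) (tI p.+1 iKi)
  | iL =>
      tAdd (tSc c (tMul (tMul (tU p gE) (tU p gF)) (tI p.+1 iKi)))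
     (tAdd (tSc c (tMul (tU p gE) (tI p.+1 iF)))
     (tAdd (tSc c (tMul (tMul (tU p gK) (tU p gF)) (tI p.+1 iX)))
     (tAdd (tMul (tU p gK) (tI p.+1 iL))
     (tAdd (tSc (- q) (tMul (tU p gK) (tI p.+1 iKi)))
           (tSc q (tMul (tU p gKi) (tI p.+1 iKi)))))))
  end.

(* tau_R : I_R -> U (x) I_R, first factor at position p, second at p+1. *)
Definition tau_img (K : fieldType) (q : K) (p : nat) (g : igen) : term K :=
  let c := (q - q^-1) ^+ 2 in
  match g with
  | iX => tMul (tU p gKi) (tI p.+1 iX)
  | iF =>
      tAdd (tMul (tU p gK) (tI p.+1 iF))
     (tAdd (tSc (- (q ^- 3 * c))
              (tMul (tMul (tMul (tU p gF) (tU p gF)) (tU p gK)) (tI p.+1 iX)))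
     (tAdd (tSc (q^-1 * (q + q^-1)) (tMul (tMul (tU p gF) (tU p gK)) (tI p.+1 iKi)))
           (tSc (- q^-1) (tMul (tMul (tU p gF) (tU p gK)) (tI p.+1 iL)))))
  | iKi => tAdd (tI p.+1 iKi) (tSc (- (q^-1 * c)) (tMul (tU p gF) (tI p.+1 iX)))
  | iL => tI p.+1 iL
  end.

Fixpoint tau_steps (K : fieldType) (q : K) (p cnt : nat) (t : term K) : term K :=
  match cnt with
  | 0 => t
  | cnt'.+1 => tau_steps q p.+1 cnt' (tsubst p (tau_img q p) t)
  end.

(* the map mu: last factor at position p, next element a of the set (a > p):
   Delta at position p, then tau_R at positions p+1, ..., a-1 *)
Definition extend (K : fieldType) (q : K) (p a : nat) (t : term K) : term K :=
  tau_steps q p.+1 (a - p.+1) (tsubst p (delta_img q p) t).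

Fixpoint lam_aux (K : fieldType) (q : K) (p : nat) (s : seq nat) (t : term K) :=
  match s with
  | [::] => t
  | a :: s' => lam_aux q a s' (extend q p a t)
  end.

(* Lambda_A for A = s (increasing list of positions) *)
Definition lam_term (K : fieldType) (q : K) (s : seq nat) : term K :=
  match s with
  | [::] => tC 1
  | a :: s' => lam_aux q a s' (tI a iL)
  end.

Definition casimir (K : fieldType) (q : K) (R : algType K) (e f k ki : nat -> R) p : R :=
  (q - q^-1) ^+ 2 *: (e p * f p) + q^-1 *: k p + q *: ki p.

Definition ugen_val (K : fieldType) (R : algType K) (e f k ki : nat -> R) p g : R :=
  match g with gE => e p | gF => f p | gK => k p | gKi => ki p end.

Fixpoint teval (K : fieldType) (q : K) (R : algType K) (e f k ki : nat -> R)
    (t : term K) : R :=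
  match t with
  | tC c => c%:A
  | tAdd a b => teval q e f k ki a + teval q e f k ki b
  | tMul a b => teval q e f k ki a * teval q e f k ki b
  | tU p g => ugen_val e f k ki p g
  | tI p g => match g with
              | iX => e p * ki p
              | iF => f p
              | iKi => ki p
              | iL => casimir q e f k ki p
              end
  end.

(* Lambda_A for A a subset of [1;n] (element x : 'I_n is position x+1) *)
Definition LambdaA (K : fieldType) (q : K) (R : algType K) (e f k ki : nat -> R)
    (n : nat) (A : {set 'I_n}) : R :=
  teval q e f k ki (lam_term q (sort leq [seq (val x).+1 | x <- enum A])).

Definition uq_tensor_rels (K : fieldType) (q : K) (R : algType K)
    (e f k ki : nat -> R) (n : nat) : Prop :=
  (forall p, (0 < p <= n)%N ->
     [/\ k p * ki p = 1, ki p * k p = 1,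
         k p * e p = q ^+ 2 *: (e p * k p),
         k p * f p = q ^- 2 *: (f p * k p)
       & e p * f p - f p * e p = (q - q^-1)^-1 *: (k p - ki p)]) /\
  (forall p p', (0 < p <= n)%N -> (0 < p' <= n)%N -> p != p' ->
     forall g g', GRing.comm (ugen_val e f k ki p g) (ugen_val e f k ki p' g')).

Definition ivl (n lo hi : nat) : {set 'I_n} := [set x : 'I_n | (lo <= x.+1 <= hi)%N].

Definition setA (n k : nat) (i j : nat -> nat) : {set 'I_n} :=
  ivl n 1 (j 1) :|: \bigcup_(2 <= m < k.+1) ivl n (i m) (j m).

From HB Require Import structures.
From mathcomp Require Import all_boot all_order all_algebra.
From mathcomp Require Import ring zify.
Set Implicit Arguments. Unset Strict Implicit. Unset Printing Implicit Defensive.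
Import GRing.Theory.
Local Open Scope ring_scope.

(* Write m = max A.  Evaluating Lambda_A from the last tensor position downwards,
   the four I_R-generators sitting at position p take values Q_p in the algebra:
   Q_m are the generators of the m-th factor, and Q_p is the image of Q_(p+1)
   under Delta if p is in A and under tau_R otherwise.  Lambda_A is the
   Lambda-component of Q_(min A), which tau_R leaves unchanged further down.

   Since Delta and tau_R are algebra maps, every Q_p satisfies the relations of
   I_R and commutes with the tensor factors below p.  For B included in A, the
   two families Q^A_p and Q^B_p satisfy in addition a finite set of "cross
   relations", among them Lambda^A Lambda^B = Lambda^B Lambda^A: they hold at
   p = max B and are preserved by the three possible simultaneous steps
   (Delta, Delta), (Delta, tau_R) and (tau_R, tau_R).  Each of these facts is an
   identity in a finitely presented algebra, certified by normalizing with a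
   rewriting system all of whose rules are valid relations, which is sound
   without any confluence argument. *)

(** * Certified normalization of noncommutative polynomials *)

(* A pair [(s, c)] stands for the Laurent polynomial [(\sum_i c_i q^i) / q^s]. *)
Definition laurent := (nat * seq int)%type.

Fixpoint cfadd (a b : seq int) : seq int :=
  match a, b with
  | [::], _ => b
  | _, [::] => a
  | x :: a', y :: b' => (x + y) :: cfadd a' b'
  end.
Definition cfscale (c : int) (b : seq int) := map (fun y => c * y) b.
Fixpoint cfmul (a b : seq int) : seq int :=
  if a is x :: a' then cfadd (cfscale x b) (0 :: cfmul a' b) else [::].

Definition ladd (x y : laurent) : laurent :=
  let s := maxn x.1 y.1 in (s, cfadd (ncons (s - x.1) 0 x.2) (ncons (s - y.1) 0 y.2)).
Definition lmul (x y : laurent) : laurent := (x.1 + y.1, cfmul x.2 y.2).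
Definition lzero (x : laurent) := all (fun c => c == 0) x.2.
Definition lone : laurent := (0%N, [:: 1]).
Definition lmone : laurent := (0%N, [:: -1]).

(* Noncommutative polynomials in variables [0, 1, 2, ...]: a list of
   monomials, each a coefficient and a word. *)
Definition nterm := (laurent * seq nat)%type.
Definition ncpoly := seq nterm.

(* A rule [(a, b, r)] rewrites the word [a b] to the polynomial [r]. *)
Definition rules := seq (nat * nat * ncpoly).

Fixpoint rule_lookup (rs : rules) (a b : nat) : option ncpoly :=
  if rs is (a', b', r) :: rs' then
    if (a' == a) && (b' == b) then Some r else rule_lookup rs' a b
  else None.

Fixpoint redex (rs : rules) (m : seq nat) : option (seq nat * ncpoly * seq nat) :=
  match m with
  | a :: (b :: w) as m' =>
      if rule_lookup rs a b is Some r then Some ([::], r, w)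
      else if redex rs m' is Some (u, r, w') then Some (a :: u, r, w') else None
  | _ => None
  end.

Fixpoint nf_term (rs : rules) (fuel : nat) (c : laurent) (m : seq nat) : ncpoly :=
  if fuel is fuel'.+1 then
    if redex rs m is Some (u, r, w) then
      flatten [seq nf_term rs fuel' (lmul c t.1) (u ++ t.2 ++ w) | t <- r]
    else [:: (c, m)]
  else [:: (c, m)].

Definition nf (rs : rules) (fuel : nat) (p : ncpoly) : ncpoly :=
  flatten [seq nf_term rs fuel t.1 t.2 | t <- p].

Fixpoint insert_term (t : nterm) (p : ncpoly) : ncpoly :=
  if p is t' :: p' then
    if t'.2 == t.2 then (ladd t'.1 t.1, t.2) :: p' else t' :: insert_term t p'
  else [:: t].
Definition collect (p : ncpoly) := foldr insert_term [::] p.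
Definition pzero (p : ncpoly) := all (fun t => lzero t.1) p.

Definition reduces_to_0 rs fuel p := pzero (collect (nf rs fuel p)).

Definition pone : ncpoly := [:: (lone, [::])].
Definition pmul (p r : ncpoly) : ncpoly :=
  [seq (lmul t.1 u.1, t.2 ++ u.2) | t <- p, u <- r].
Definition pscale (c : laurent) (p : ncpoly) : ncpoly := [seq (lmul c t.1, t.2) | t <- p].
Definition msubst (s : nat -> ncpoly) (m : seq nat) : ncpoly :=
  foldr (fun a acc => pmul (s a) acc) pone m.
Definition psubst (s : nat -> ncpoly) (p : ncpoly) : ncpoly :=
  flatten [seq pscale t.1 (msubst s t.2) | t <- p].
Definition prename (f : nat -> nat) (p : ncpoly) : ncpoly := [seq (t.1, map f t.2) | t <- p].
Definition rules_rename (f : nat -> nat) (rs : rules) : rules :=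
  [seq (f x.1.1, f x.1.2, prename f x.2) | x <- rs].
Definition rule_poly (x : nat * nat * ncpoly) : ncpoly :=
  (lone, [:: x.1.1; x.1.2]) :: pscale lmone x.2.

Definition respects (ctx : rules) (s : nat -> ncpoly) (rs : rules) :=
  all (fun x => reduces_to_0 ctx 200 (psubst s (rule_poly x))) rs.

Definition patoms (p : ncpoly) : seq nat := flatten [seq t.2 | t <- p].
Definition ratoms (rs : rules) : seq nat :=
  flatten [seq x.1.1 :: x.1.2 :: patoms x.2 | x <- rs].
Definition comm_rules (s1 s2 : seq nat) : rules :=
  [seq (a, b, [:: (lone, [:: b; a])]) | a <- s1, b <- s2].

Section Evaluation.
Variables (K : fieldType) (q : K) (R : algType K).
Hypothesis hq0 : q != 0.

Fixpoint cfeval (a : seq int) : K :=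
  if a is x :: a' then x%:~R + q * cfeval a' else 0.
Definition leval (x : laurent) : K := cfeval x.2 / q ^+ x.1.

Lemma cfeval_add a b : cfeval (cfadd a b) = cfeval a + cfeval b.
Proof.
elim: a b => [|x a IH] [|y b] /=; rewrite ?add0r ?addr0 //.
by rewrite IH rmorphD mulrDr addrACA.
Qed.

Lemma cfeval_scale c b : cfeval (cfscale c b) = c%:~R * cfeval b.
Proof.
elim: b => [|y b IH] /=; first by rewrite mulr0.
by rewrite IH rmorphM mulrDr mulrCA.
Qed.

Lemma cfeval_mul a b : cfeval (cfmul a b) = cfeval a * cfeval b.
Proof.
elim: a => [|x a IH] /=; first by rewrite mul0r.
by rewrite cfeval_add cfeval_scale /= IH add0r mulrDl mulrA.
Qed.

Lemma cfeval_ncons k a : cfeval (ncons k 0 a) = q ^+ k * cfeval a.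
Proof.
elim: k => [|k IH] /=; first by rewrite mul1r.
by rewrite IH add0r exprS mulrA.
Qed.

Lemma leval_add x y : leval (ladd x y) = leval x + leval y.
Proof.
case: x y => [s a] [t b]; rewrite /leval /ladd /= cfeval_add !cfeval_ncons mulrDl.
have shift u c : (u <= maxn s t)%N ->
    q ^+ (maxn s t - u) * c / q ^+ maxn s t = c / q ^+ u.
  move=> hu; rewrite -{2}(subnK hu) exprD invfM mulrACA.
  by rewrite mulfV ?expf_neq0 // mul1r.
by rewrite !shift ?leq_maxl ?leq_maxr.
Qed.

Lemma leval_mul x y : leval (lmul x y) = leval x * leval y.
Proof.
by case: x y => [s a] [t b]; rewrite /leval /lmul /= cfeval_mul exprD invfM mulrACA.
Qed.

Lemma leval_zero x : lzero x -> leval x = 0.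
Proof.
case: x => s a; rewrite /lzero /leval /= => H.
suff -> : cfeval a = 0 by rewrite mul0r.
by elim: a H => [|y a IH] //= /andP [/eqP -> /IH ->]; rewrite mulr0 addr0.
Qed.

Lemma leval1 : leval lone = 1.
Proof. by rewrite /leval /= mulr0 addr0 invr1 mulr1. Qed.

Lemma levalN1 : leval lmone = -1.
Proof. by rewrite /leval /= mulr0 addr0 invr1 mulr1. Qed.

Lemma commrZ (c : K) (x y : R) : GRing.comm x y -> GRing.comm x (c *: y).
Proof. by move=> Hxy; rewrite /GRing.comm -scalerAl -scalerAr Hxy. Qed.

Section Valuation.
Variable v : nat -> R.

Definition meval (m : seq nat) : R := foldr (fun a acc => v a * acc) 1 m.
Definition neval (t : nterm) : R := leval t.1 *: meval t.2.
Definition peval (p : ncpoly) : R := \sum_(t <- p) neval t.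

Lemma meval_cat u w : meval (u ++ w) = meval u * meval w.
Proof. by elim: u => [|a u IH] /=; rewrite ?mul1r // IH mulrA. Qed.

Lemma peval_cat p r : peval (p ++ r) = peval p + peval r.
Proof. exact: big_cat. Qed.

Lemma peval_cons t p : peval (t :: p) = neval t + peval p.
Proof. exact: big_cons. Qed.

Lemma peval1 t : peval [:: t] = neval t.
Proof. by rewrite peval_cons /peval big_nil addr0. Qed.

Lemma peval_word m : peval [:: (lone, m)] = meval m.
Proof. by rewrite peval1 /neval leval1 scale1r. Qed.

Lemma peval_flatten (ps : seq ncpoly) : peval (flatten ps) = \sum_(p <- ps) peval p.
Proof.
elim: ps => [|p ps IH] /=; first by rewrite /peval !big_nil.
by rewrite peval_cat IH big_cons.
Qed.

Fixpoint rules_hold (rs : rules) : Prop :=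
  if rs is (a, b, r) :: rs' then v a * v b = peval r /\ rules_hold rs' else True.

Lemma rules_hold_cat rs1 rs2 :
  rules_hold (rs1 ++ rs2) <-> rules_hold rs1 /\ rules_hold rs2.
Proof.
elim: rs1 => [|[[a b] r] rs1 IH] /=; first by split=> // [[]].
by rewrite IH; split=> [[? []]|[[]]].
Qed.

Lemma rule_lookupP rs a b r :
  rules_hold rs -> rule_lookup rs a b = Some r -> v a * v b = peval r.
Proof.
elim: rs => [|[[a' b'] r'] rs IH] //= [H1 H2].
case: ifP => [/andP [/eqP <- /eqP <-] [<-] //|_]; exact: IH.
Qed.

Lemma redexP rs m u r w : rules_hold rs -> redex rs m = Some (u, r, w) ->
  meval m = meval u * peval r * meval w.
Proof.
move=> Hr; elim: m u r w => [|a m IH] u r w //=; case: m IH => [|b w'] IH //.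
case E: (rule_lookup rs a b) => [r'|].
  by case=> <- <- <-; rewrite /= mul1r mulrA (rule_lookupP Hr E).
case E2: (redex rs (b :: w')) => [[[u' r'] w'']|] //.
by case=> <- <- <-; rewrite (IH _ _ _ E2) /= !mulrA.
Qed.

Lemma nf_termP rs fuel c m : rules_hold rs ->
  peval (nf_term rs fuel c m) = leval c *: meval m.
Proof.
move=> Hr; elim: fuel c m => [|fuel IH] c m /=; first by rewrite peval1.
case E: (redex rs m) => [[[u r] w]|]; last by rewrite peval1.
rewrite peval_flatten big_map (redexP Hr E).
under eq_bigr => t _ do rewrite IH leval_mul !meval_cat -scalerA.
rewrite -scaler_sumr mulr_sumr mulr_suml; congr (_ *: _); apply: eq_bigr => t _.
by rewrite /neval -scalerAr -scalerAl mulrA.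
Qed.

Lemma nfP rs fuel p : rules_hold rs -> peval (nf rs fuel p) = peval p.
Proof.
move=> Hr; rewrite /nf peval_flatten big_map [in RHS]/peval.
by apply: eq_bigr => t _; rewrite nf_termP.
Qed.

Lemma collectP p : peval (collect p) = peval p.
Proof.
elim: p => [|t p IH] //=; rewrite peval_cons -IH.
elim: (collect p) => [|t' p' IHp] /=; first by rewrite peval1 /peval big_nil addr0.
case: ifP => [/eqP E|_]; rewrite !peval_cons.
  by rewrite /neval /= leval_add scalerDl E addrA (addrC (_ *: _)).
by rewrite IHp addrCA.
Qed.

Lemma pzeroP p : pzero p -> peval p = 0.
Proof.
elim: p => [|t p IH] /=; first by rewrite /peval big_nil.
by case/andP=> H1 H2; rewrite peval_cons IH // /neval leval_zero // scale0r addr0.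
Qed.

Lemma reduces_to_0P rs fuel p : rules_hold rs -> reduces_to_0 rs fuel p -> peval p = 0.
Proof. by move=> Hr H; rewrite -(nfP fuel p Hr) -collectP; apply: pzeroP. Qed.

Lemma peval_pone : peval pone = 1.
Proof. exact: peval_word. Qed.

Lemma peval_pscale c p : peval (pscale c p) = leval c *: peval p.
Proof.
rewrite /pscale /peval big_map scaler_sumr; apply: eq_bigr => t _.
by rewrite /neval /= leval_mul scalerA.
Qed.

Lemma peval_pmul p r : peval (pmul p r) = peval p * peval r.
Proof.
elim: p => [|t p IH]; first by rewrite /pmul /peval !big_nil mul0r.
rewrite /pmul /= peval_cat -/(pmul p r) IH peval_cons mulrDl; congr (_ + _).
rewrite /peval big_map mulr_sumr; apply: eq_bigr => u _.
by rewrite /neval /= leval_mul meval_cat -scalerA -scalerAl -scalerAr.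
Qed.

Lemma peval_rule_poly x : peval (rule_poly x) = v x.1.1 * v x.1.2 - peval x.2.
Proof.
by rewrite peval_cons peval_pscale levalN1 scaleN1r /neval leval1 scale1r /= mulr1.
Qed.

Lemma peval_comm p x : {in patoms p, forall a, GRing.comm x (v a)} ->
  GRing.comm x (peval p).
Proof.
move=> H; rewrite /peval big_seq; apply: commr_sum => t Ht.
apply: commrZ; have : {subset t.2 <= patoms p}.
  by move=> a Ha; apply/flattenP; exists t.2 => //; apply: map_f.
elim: t.2 => [|a m IH] /= Hs; first exact: commr1.
apply: commrM; first by apply: H; apply: Hs; rewrite mem_head.
by apply: IH => b Hb; apply: Hs; rewrite in_cons Hb orbT.
Qed.

Lemma comm_rules_hold s1 s2 :
  {in s1 & s2, forall a b, v a * v b = v b * v a} -> rules_hold (comm_rules s1 s2).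
Proof.
elim: s1 => [|a s1 IH] //= H; apply/rules_hold_cat; split; last first.
  by apply: IH => x y Hx Hy; apply: H; rewrite // in_cons Hx orbT.
have {}H : {in s2, forall b, v a * v b = v b * v a} by move=> b; apply: H; rewrite mem_head.
elim: s2 H {IH} => [|b s2 IHb] //= H; split.
  by rewrite peval_word /= mulr1; apply: H; rewrite mem_head.
by apply: IHb => x Hx; apply: H; rewrite in_cons Hx orbT.
Qed.

End Valuation.

Lemma peval_eq_in (v w : nat -> R) p : {in patoms p, v =1 w} -> peval v p = peval w p.
Proof.
move=> H; rewrite /peval !big_seq; apply: eq_bigr => t Ht; rewrite /neval; congr (_ *: _).
have : {subset t.2 <= patoms p}.
  by move=> a Ha; apply/flattenP; exists t.2 => //; apply: map_f.
elim: t.2 => [|a m IH] //= Hs; rewrite IH ?H ?Hs ?mem_head //.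
by move=> b Hb; apply: Hs; rewrite in_cons Hb orbT.
Qed.

Lemma rules_hold_eq_in (v w : nat -> R) rs : {in ratoms rs, v =1 w} ->
  rules_hold v rs -> rules_hold w rs.
Proof.
elim: rs => [|[[a b] r] rs IH] //= H [H1 H2]; split.
  rewrite -!H ?H1 ?in_cons ?eqxx ?orbT //; apply: peval_eq_in => x Hx; apply: H.
  by rewrite /ratoms /= !in_cons mem_cat Hx !orbT.
by apply: IH => // x Hx; apply: H; rewrite /ratoms /= !in_cons mem_cat -/(ratoms rs) Hx !orbT.
Qed.

Lemma rules_hold_eq (v w : nat -> R) rs : v =1 w -> rules_hold v rs -> rules_hold w rs.
Proof. by move=> H; apply: rules_hold_eq_in => a _. Qed.

Lemma peval_prename (v : nat -> R) f p : peval v (prename f p) = peval (v \o f) p.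
Proof.
rewrite /prename /peval big_map; apply: eq_bigr => t _; rewrite /neval /=; congr (_ *: _).
by elim: t.2 => [|a m IH] //=; rewrite IH.
Qed.

Lemma rules_hold_rename (v : nat -> R) f rs :
  rules_hold v (rules_rename f rs) <-> rules_hold (v \o f) rs.
Proof.
elim: rs => [|[[a b] r] rs IH] //=; rewrite peval_prename.
by split=> [[H1 /IH H2]|[H1 /IH H2]].
Qed.

Lemma peval_psubst (v : nat -> R) s p : peval v (psubst s p) = peval (peval v \o s) p.
Proof.
rewrite /psubst peval_flatten big_map /peval; apply: eq_bigr => t _.
rewrite -/(peval v _) peval_pscale /neval; congr (_ *: _).
elim: t.2 => [|a m IH] /=; first by rewrite peval_pone.
by rewrite /msubst /= peval_pmul -/(msubst s m) IH.
Qed.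

Lemma rules_hold_subst (v : nat -> R) (ctx : rules) (s : nat -> ncpoly) (rs : rules) :
  rules_hold v ctx -> respects ctx s rs -> rules_hold (fun a => peval v (s a)) rs.
Proof.
move=> Hc; elim: rs => [|[[a b] r] rs IH] //= /andP [H1 H2]; split; last exact: IH.
move: (reduces_to_0P Hc H1); rewrite peval_psubst peval_rule_poly /=.
by move/eqP; rewrite subr_eq0 => /eqP.
Qed.

End Evaluation.

(** * Generators and relations *)

(* Variables [0..3] stand for the generators [F, K, K^-1, (q - q^-1)^2 E] of
   one tensor factor of U_q(sl_2); in [IR_rules], [cross_rules] and as indices of
   [delta_poly], [tau_poly], [gen_poly] they stand for the generators
   [(q - q^-1)^2 EK^-1, F, K^-1, Lambda] of I_R, and [4..7] for those of a second
   copy of I_R.  The factor [(q - q^-1)^2] keeps all coefficients in Z[q, q^-1]. *)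
Definition Uq_rules : rules :=
  [:: (3, 0, [:: ((0%N, [:: 1]), [:: 0; 3]);
                 ((1%N, [:: (-1); 0; 1]), [:: 1]);
                 ((1%N, [:: 1; 0; (-1)]), [:: 2])]);
      (1, 0, [:: ((2%N, [:: 1]), [:: 0; 1])]);
      (2, 0, [:: ((0%N, [:: 0; 0; 1]), [:: 0; 2])]);
      (3, 1, [:: ((2%N, [:: 1]), [:: 1; 3])]);
      (3, 2, [:: ((0%N, [:: 0; 0; 1]), [:: 2; 3])]);
      (1, 2, [:: ((0%N, [:: 1]), [:: ])]);
      (2, 1, [:: ((0%N, [:: 1]), [:: ])])].

Definition IR_rules : rules :=
  [:: (2, 0, [:: ((2%N, [:: 1]), [:: 0; 2])]);
      (2, 1, [:: ((0%N, [:: 0; 0; 1]), [:: 1; 2])]);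
      (0, 1, [:: ((0%N, [:: 0; 0; 1]), [:: 2; 3]);
                 ((0%N, [:: 0; (-1)]), [:: ]);
                 ((0%N, [:: 0; 0; 0; (-1)]), [:: 2; 2])]);
      (1, 0, [:: ((0%N, [:: 1]), [:: 2; 3]);
                 ((0%N, [:: 0; (-1)]), [:: ]);
                 ((1%N, [:: (-1)]), [:: 2; 2])]);
      (3, 0, [:: ((0%N, [:: 1]), [:: 0; 3])]);
      (3, 1, [:: ((0%N, [:: 1]), [:: 1; 3])]);
      (3, 2, [:: ((0%N, [:: 1]), [:: 2; 3])])].

(* Relations between two families of I_R-generators, the first at positions
   [0..3], the second at [4..7]; they include [Lambda Lambda' = Lambda' Lambda]. *)
Definition cross_rules : rules :=
  [:: (0, 4, [:: ((0%N, [:: 1]), [:: 4; 0])]);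
      (0, 5, [:: ((0%N, [:: 1]), [:: 5; 0]);
                 ((1%N, [:: 1; 0; 0; 0; (-1)]), [:: 6; 2]);
                 ((0%N, [:: (-1); 0; 1]), [:: 7; 2])]);
      (0, 6, [:: ((2%N, [:: (-1); 0; 1]), [:: 4; 2]); ((0%N, [:: 1]), [:: 6; 0])]);
      (0, 7, [:: ((0%N, [:: 1]), [:: 7; 0])]);
      (1, 4, [:: ((0%N, [:: 1]), [:: 4; 1]);
                 ((1%N, [:: (-1); 0; 0; 0; 1]), [:: 6; 2]);
                 ((0%N, [:: 1; 0; (-1)]), [:: 7; 2])]);
      (1, 5, [:: ((0%N, [:: 1]), [:: 5; 1])]);
      (1, 6, [:: ((0%N, [:: 1; 0; (-1)]), [:: 5; 2]); ((0%N, [:: 1]), [:: 6; 1])]);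
      (1, 7, [:: ((0%N, [:: 1]), [:: 7; 1])]);
      (2, 4, [:: ((2%N, [:: 1]), [:: 4; 2])]);
      (2, 5, [:: ((0%N, [:: 0; 0; 1]), [:: 5; 2])]);
      (2, 6, [:: ((0%N, [:: 1]), [:: 6; 2])]);
      (2, 7, [:: ((0%N, [:: 1]), [:: 7; 2])]);
      (3, 4, [:: ((3%N, [:: 1; 0; 0; 0; (-1)]), [:: 4; 2]);
                 ((0%N, [:: 0; 0; 1]), [:: 4; 3]);
                 ((1%N, [:: (-1); 0; 0; 0; 1]), [:: 6; 0]);
                 ((0%N, [:: 1; 0; (-1)]), [:: 7; 0])]);
      (3, 5, [:: ((1%N, [:: (-1); 0; 0; 0; 1]), [:: 5; 2]);
                 ((2%N, [:: 1]), [:: 5; 3]);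
                 ((3%N, [:: 1; 0; 0; 0; (-1)]), [:: 6; 1]);
                 ((2%N, [:: (-1); 0; 1]), [:: 7; 1])]);
      (3, 6, [:: ((2%N, [:: (-1); 0; 1]), [:: 4; 1]);
                 ((2%N, [:: 1; 0; (-1)]), [:: 5; 0]);
                 ((3%N, [:: 1; 0; (-1); 0; (-1); 0; 1]), [:: 6; 2]);
                 ((0%N, [:: 1]), [:: 6; 3]);
                 ((2%N, [:: (-1); 0; 2; 0; (-1)]), [:: 7; 2])]);
      (3, 7, [:: ((0%N, [:: 1]), [:: 7; 3])])].

(* [delta_poly], [tau_poly] are the images of the I_R-generators under Delta and
   tau_R, with U at [0..3] and I_R at [4..7]; [gen_poly] embeds I_R into U. *)
Definition delta_poly (g : nat) : ncpoly :=
  match g with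
  | 0 => [:: ((0%N, [:: 1]), [:: 3; 2; 6]); ((0%N, [:: 1]), [:: 4])]
  | 1 => [:: ((0%N, [:: 1]), [:: 0; 6]); ((0%N, [:: 1]), [:: 5])]
  | 2 => [:: ((0%N, [:: 1]), [:: 2; 6])]
  | _ => [:: ((0%N, [:: 1]), [:: 3; 0; 6]);
             ((0%N, [:: 1]), [:: 3; 5]);
             ((0%N, [:: 1]), [:: 1; 0; 4]);
             ((0%N, [:: 1]), [:: 1; 7]);
             ((0%N, [:: 0; (-1)]), [:: 1; 6]);
             ((0%N, [:: 0; 1]), [:: 2; 6])]
  end.

Definition tau_poly (g : nat) : ncpoly :=
  match g with
  | 0 => [:: ((0%N, [:: 1]), [:: 2; 4])]
  | 1 => [:: ((0%N, [:: 1]), [:: 1; 5]);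
             ((3%N, [:: (-1)]), [:: 0; 0; 1; 4]);
             ((2%N, [:: 1; 0; 1]), [:: 0; 1; 6]);
             ((1%N, [:: (-1)]), [:: 0; 1; 7])]
  | 2 => [:: ((0%N, [:: 1]), [:: 6]); ((1%N, [:: (-1)]), [:: 0; 4])]
  | _ => [:: ((0%N, [:: 1]), [:: 7])]
  end.

Definition gen_poly (g : nat) : ncpoly :=
  match g with
  | 0 => [:: ((0%N, [:: 1]), [:: 3; 2])]
  | 1 => [:: ((0%N, [:: 1]), [:: 0])]
  | 2 => [:: ((0%N, [:: 1]), [:: 2])]
  | _ => [:: ((0%N, [:: 1]), [:: 3; 0]); ((1%N, [:: 1]), [:: 1]); ((0%N, [:: 0; 1]), [:: 2])]
  end.

Definition UI_comm_rules : rules := comm_rules (iota 4 4) (iota 0 4).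

Definition UIR_rules : rules :=
  Uq_rules ++ rules_rename (addn 4) IR_rules ++ UI_comm_rules.

Definition shiftB (a : nat) : nat := if (a < 4)%N then a else (a + 4)%N.

(* U at [0..3], a first copy of I_R at [4..7] and a second one at [8..11]. *)
Definition UIR2_rules : rules :=
  UIR_rules ++ rules_rename (addn 8) IR_rules
  ++ rules_rename shiftB UI_comm_rules
  ++ rules_rename (addn 4) cross_rules.

Definition pair_subst (PA PB : nat -> ncpoly) (a : nat) : ncpoly :=
  if (a < 4)%N then PA a else prename shiftB (PB (a - 4)%N).

Lemma gen_respects_IR : respects Uq_rules gen_poly IR_rules.
Proof. by vm_compute. Qed.
Lemma delta_respects_IR : respects UIR_rules delta_poly IR_rules.
Proof. by vm_compute. Qed.
Lemma tau_respects_IR : respects UIR_rules tau_poly IR_rules.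
Proof. by vm_compute. Qed.
Lemma delta_delta_respects_cross :
  respects UIR2_rules (pair_subst delta_poly delta_poly) cross_rules.
Proof. by vm_compute. Qed.
Lemma delta_tau_respects_cross :
  respects UIR2_rules (pair_subst delta_poly tau_poly) cross_rules.
Proof. by vm_compute. Qed.
Lemma tau_tau_respects_cross :
  respects UIR2_rules (pair_subst tau_poly tau_poly) cross_rules.
Proof. by vm_compute. Qed.
Lemma delta_gen_respects_cross :
  respects UIR_rules (fun a => if (a < 4)%N then delta_poly a else gen_poly (a - 4)) cross_rules.
Proof. by vm_compute. Qed.
Lemma gen_gen_respects_cross :
  respects Uq_rules (fun a => if (a < 4)%N then gen_poly a else gen_poly (a - 4)) cross_rules.
Proof. by vm_compute. Qed.

Lemma Uq_rules_atoms : all (fun a => a < 4)%N (ratoms Uq_rules).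
Proof. by vm_compute. Qed.
Lemma IR_rules_atoms : all (fun a => a < 4)%N (ratoms IR_rules).
Proof. by vm_compute. Qed.
Lemma UI_comm_rules_atoms : all (fun a => a < 8)%N (ratoms UI_comm_rules).
Proof. by vm_compute. Qed.
Lemma UIR_rules_atoms : all (fun a => a < 8)%N (ratoms UIR_rules).
Proof. by vm_compute. Qed.
Lemma delta_poly_atoms g : all (fun a => a < 8)%N (patoms (delta_poly g)).
Proof. by case: g => [|[|[|g]]]; vm_compute. Qed.
Lemma tau_poly_atoms g : all (fun a => a < 8)%N (patoms (tau_poly g)).
Proof. by case: g => [|[|[|g]]]; vm_compute. Qed.
Lemma gen_poly_atoms g : all (fun a => a < 4)%N (patoms (gen_poly g)).
Proof. by case: g => [|[|[|g]]]; vm_compute. Qed.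

(** * States and their invariants *)

Lemma mulrr_sub1_neq0 (K : fieldType) (q : K) : q != 0 -> q - q^-1 != 0 -> q * q - 1 != 0.
Proof.
move=> hq0; apply: contra => /eqP H; apply/eqP.
have -> : q - q^-1 = (q * q - 1) / q by field.
by rewrite H mul0r.
Qed.

Lemma subr_inv_neq0 (K : fieldType) (q : K) : q != 0 -> q ^+ 2 != 1 -> q - q^-1 != 0.
Proof. by move=> q0; apply: contra => /eqP/subr0_eq qE; rewrite expr2 {2}qE mulfV. Qed.

Ltac coef_eq hq0 hd := field; rewrite ?hq0 ?hd ?(mulrr_sub1_neq0 hq0 hd) ?oner_eq0 ?andbT //.
Ltac match_coefs hq0 hd :=
  first [ congr (_ *: _); coef_eq hq0 hd
        | rewrite -[LHS]scale1r; congr (_ *: _); coef_eq hq0 hd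
        | rewrite -[RHS]scale1r; congr (_ *: _); coef_eq hq0 hd
        | congr (_ + _); match_coefs hq0 hd ].
Ltac normalize := rewrite ?mulr_algl -?scalerAl -?scalerAr ?scalerA ?mulrA ?scalerDr
                          ?scalerA ?addrA.
Ltac unfold_peval := rewrite /peval ?big_cons ?big_nil ?addr0 /neval /leval /= ?mulr1
                             ?rmorph0 ?rmorph1 ?rmorphN1 /tSc /=.

Section States.
Variables (K : fieldType) (q : K) (R : algType K) (e f kk ki : nat -> R) (n : nat).
Hypothesis hq0 : q != 0.
Hypothesis hd : q - q^-1 != 0.
Hypothesis hrel : uq_tensor_rels q e f kk ki n.

Definition ugens (p : nat) (a : nat) : R :=
  match a with 0 => f p | 1 => kk p | 2 => ki p | _ => (q - q^-1) ^+ 2 *: e p end.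

Definition vcat (u Q : nat -> R) (a : nat) : R := if (a < 4)%N then u a else Q (a - 4)%N.

(* A state is a family of values for the four I_R-generators. *)
Definition delta_state p (Q : nat -> R) a := peval q (vcat (ugens p) Q) (delta_poly a).
Definition tau_state p (Q : nat -> R) a := peval q (vcat (ugens p) Q) (tau_poly a).
Definition gen_state p a := peval q (ugens p) (gen_poly a).

Definition IR_rel (Q : nat -> R) := rules_hold q Q IR_rules.
Definition cross_rel (QA QB : nat -> R) := rules_hold q (vcat QA QB) cross_rules.
Definition commutes_U p (Q : nat -> R) := forall a u, GRing.comm (ugens p u) (Q a).

Lemma vcat_lt4 (u Q : nat -> R) a : (a < 4)%N -> vcat u Q a = u a.
Proof. by rewrite /vcat => ->. Qed.

Lemma vcat_add4 (u Q : nat -> R) a : vcat u Q (4 + a) = Q a.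
Proof. by rewrite /vcat ltnNge leq_addr /= addKn. Qed.

Lemma eq_in_bounded (v w : nat -> R) (b : nat) s : all (fun a => a < b)%N s ->
  (forall a, (a < b)%N -> v a = w a) -> {in s, v =1 w}.
Proof. by move=> /allP H Hv a Ha; apply/Hv/H. Qed.

Lemma ugens_Uq_rules p : (0 < p <= n)%N -> rules_hold q (ugens p) Uq_rules.
Proof.
move=> hp; case: hrel => /(_ p hp) [kK Kk kE kF EF] _.
have Kinv_conj x c : c != 0 -> kk p * x = c *: (x * kk p) -> ki p * x = c^-1 *: (x * ki p).
  move=> c0 /(congr1 (fun y => ki p * y * ki p)).
  rewrite -!scalerAr -!scalerAl !mulrA Kk mul1r -!mulrA kK mulr1 => ->.
  by rewrite scalerA mulVf ?scale1r.
have q2_neq0 : q ^+ 2 != 0 by rewrite expf_neq0.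
have kiE := Kinv_conj _ _ q2_neq0 kE.
have kiF := Kinv_conj _ _ (invr_neq0 q2_neq0) kF.
have ef : e p * f p = f p * e p + (q - q^-1)^-1 *: (kk p - ki p).
  by rewrite -EF addrC subrK.
rewrite /=; unfold_peval.
split.
  rewrite -scalerAl -scalerAr ef scalerDr scalerA scalerBr scalerA; congr (_ + _).
    by congr (_ *: _); coef_eq hq0 hd.
  by rewrite -scaleNr; congr (_ + _); congr (_ *: _); coef_eq hq0 hd.
split; first by rewrite kF; congr (_ *: _); coef_eq hq0 hd.
split; first by rewrite kiF; congr (_ *: _); coef_eq hq0 hd.
split; first by rewrite -scalerAl -scalerAr kE !scalerA; congr (_ *: _); coef_eq hq0 hd.
split; first by rewrite -scalerAl -scalerAr kiE !scalerA; congr (_ *: _); coef_eq hq0 hd.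
split; first by rewrite kK mulr0 addr0 invr1 mulr1 scale1r.
by rewrite Kk mulr0 addr0 invr1 mulr1 scale1r.
Qed.

Lemma ugens_scaled p a : exists c g, ugens p a = c *: ugen_val e f kk ki p g.
Proof.
by case: a => [|[|[|a]]];
  [exists 1, gF | exists 1, gK | exists 1, gKi | exists ((q - q^-1) ^+ 2), gE]; rewrite ?scale1r.
Qed.

Lemma ugens_comm p p' a b : (0 < p <= n)%N -> (0 < p' <= n)%N -> p != p' ->
  GRing.comm (ugens p' a) (ugens p b).
Proof.
move=> hp hp' hne; have [c [g ->]] := ugens_scaled p' a; have [c' [g' ->]] := ugens_scaled p b.
apply/commrZ/commr_sym/commrZ/commr_sym.
by case: hrel => _ /(_ p' p hp' hp); apply; rewrite eq_sym.
Qed.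

Lemma UI_comm_rules_hold p Q : commutes_U p Q ->
  rules_hold q (vcat (ugens p) Q) UI_comm_rules.
Proof.
move=> HC; apply: comm_rules_hold => a b; rewrite !mem_iota /= => /andP [Ha _] Hb.
by rewrite /vcat Hb ltnNge Ha /=; apply/esym/HC.
Qed.

Lemma UIR_rules_hold p Q : (0 < p <= n)%N -> IR_rel Q -> commutes_U p Q ->
  rules_hold q (vcat (ugens p) Q) UIR_rules.
Proof.
move=> hp HI HC; apply/rules_hold_cat; split.
  apply: rules_hold_eq_in _ (ugens_Uq_rules hp).
  by apply: eq_in_bounded Uq_rules_atoms _ => a Ha; rewrite vcat_lt4.
apply/rules_hold_cat; split; last exact: UI_comm_rules_hold.
apply/rules_hold_rename; apply: rules_hold_eq_in HI.
by apply: eq_in_bounded IR_rules_atoms _ => a _; rewrite /= vcat_add4.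
Qed.

Definition vals2 p (QA QB : nat -> R) := vcat (ugens p) (vcat QA QB).

Lemma vals2_lt8 p QA QB a : (a < 8)%N -> vals2 p QA QB a = vcat (ugens p) QA a.
Proof.
move=> Ha; rewrite /vals2 /vcat; case: ifP => // H.
by rewrite ifT // ltn_subLR // leqNgt H.
Qed.

Lemma vals2_shiftB p QA QB a : (a < 8)%N -> vals2 p QA QB (shiftB a) = vcat (ugens p) QB a.
Proof.
move=> Ha; rewrite /vals2 /vcat /shiftB; case: (ltnP a 4) => H4; first by rewrite H4.
rewrite ifF; last by rewrite ltnNge (leq_trans H4) // leq_addr.
by rewrite addnK ltnNge H4.
Qed.

Lemma UIR2_rules_hold p QA QB : (0 < p <= n)%N -> IR_rel QA -> IR_rel QB ->
  cross_rel QA QB -> commutes_U p QA -> commutes_U p QB ->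
  rules_hold q (vals2 p QA QB) UIR2_rules.
Proof.
move=> hp HA HB HAB CA CB; apply/rules_hold_cat; split.
  apply: rules_hold_eq_in _ (UIR_rules_hold hp HA CA).
  by apply: eq_in_bounded UIR_rules_atoms _ => a Ha; rewrite vals2_lt8.
apply/rules_hold_cat; split.
  apply/rules_hold_rename; apply: rules_hold_eq_in HB.
  apply: eq_in_bounded IR_rules_atoms _ => a Ha.
  by rewrite /vals2 /= (_ : 8 + a = 4 + (4 + a))%N // !vcat_add4.
apply/rules_hold_cat; split.
  apply/rules_hold_rename; apply: rules_hold_eq_in _ (UI_comm_rules_hold CB).
  by apply: eq_in_bounded UI_comm_rules_atoms _ => a Ha; rewrite /= vals2_shiftB.
apply/rules_hold_rename; apply: rules_hold_eq _ HAB => a.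
by rewrite /vals2 /= vcat_add4.
Qed.

Lemma gen_state_IR p : (0 < p <= n)%N -> IR_rel (gen_state p).
Proof. by move=> hp; exact (rules_hold_subst hq0 (ugens_Uq_rules hp) gen_respects_IR). Qed.

Lemma delta_state_IR p Q : (0 < p <= n)%N -> IR_rel Q -> commutes_U p Q ->
  IR_rel (delta_state p Q).
Proof.
by move=> hp HI HC; exact (rules_hold_subst hq0 (UIR_rules_hold hp HI HC) delta_respects_IR).
Qed.

Lemma tau_state_IR p Q : (0 < p <= n)%N -> IR_rel Q -> commutes_U p Q ->
  IR_rel (tau_state p Q).
Proof.
by move=> hp HI HC; exact (rules_hold_subst hq0 (UIR_rules_hold hp HI HC) tau_respects_IR).
Qed.

Lemma cross_rel_step (PA PB : nat -> ncpoly) p QA QB : (0 < p <= n)%N ->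
  IR_rel QA -> IR_rel QB -> cross_rel QA QB -> commutes_U p QA -> commutes_U p QB ->
  respects UIR2_rules (pair_subst PA PB) cross_rules ->
  (forall g, all (fun a => a < 8)%N (patoms (PA g))) ->
  (forall g, all (fun a => a < 8)%N (patoms (PB g))) ->
  cross_rel (fun a => peval q (vcat (ugens p) QA) (PA a))
            (fun a => peval q (vcat (ugens p) QB) (PB a)).
Proof.
move=> hp HA HB HAB CA CB Hc AtA AtB.
apply: rules_hold_eq _ (rules_hold_subst hq0 (UIR2_rules_hold hp HA HB HAB CA CB) Hc) => a.
rewrite /= /pair_subst /vcat; case: ifP => _.
  by apply: peval_eq_in; apply: eq_in_bounded (AtA a) _ => b Hb; rewrite vals2_lt8.
rewrite peval_prename; apply: peval_eq_in; apply: eq_in_bounded (AtB _) _ => b Hb.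
by rewrite /= vals2_shiftB.
Qed.

Section CrossSteps.
Variables (p : nat) (QA QB : nat -> R).
Hypotheses (hp : (0 < p <= n)%N) (HA : IR_rel QA) (HB : IR_rel QB)
  (HAB : cross_rel QA QB) (CA : commutes_U p QA) (CB : commutes_U p QB).

Lemma cross_rel_delta_delta : cross_rel (delta_state p QA) (delta_state p QB).
Proof.
exact: (cross_rel_step hp HA HB HAB CA CB delta_delta_respects_cross
          delta_poly_atoms delta_poly_atoms).
Qed.

Lemma cross_rel_delta_tau : cross_rel (delta_state p QA) (tau_state p QB).
Proof.
exact: (cross_rel_step hp HA HB HAB CA CB delta_tau_respects_cross
          delta_poly_atoms tau_poly_atoms).
Qed.

Lemma cross_rel_tau_tau : cross_rel (tau_state p QA) (tau_state p QB).
Proof.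
exact: (cross_rel_step hp HA HB HAB CA CB tau_tau_respects_cross
          tau_poly_atoms tau_poly_atoms).
Qed.

End CrossSteps.

Lemma cross_rel_delta_gen p Q : (0 < p <= n)%N -> IR_rel Q -> commutes_U p Q ->
  cross_rel (delta_state p Q) (gen_state p).
Proof.
move=> hp HI HC.
apply: rules_hold_eq _
  (rules_hold_subst hq0 (UIR_rules_hold hp HI HC) delta_gen_respects_cross) => a.
rewrite /= [in RHS]/vcat; case: ifP => // _.
by apply: peval_eq_in; apply: eq_in_bounded (gen_poly_atoms _) _ => b Hb; rewrite vcat_lt4.
Qed.

Lemma cross_rel_gen_gen p : (0 < p <= n)%N -> cross_rel (gen_state p) (gen_state p).
Proof.
move=> hp; apply: rules_hold_eq _
  (rules_hold_subst hq0 (ugens_Uq_rules hp) gen_gen_respects_cross).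
by move=> a; rewrite /= /vcat; case: ifP.
Qed.

Lemma commutes_U_step (P : nat -> ncpoly) p p' Q :
  (0 < p <= n)%N -> (0 < p' <= n)%N -> p != p' -> commutes_U p' Q ->
  commutes_U p' (fun a => peval q (vcat (ugens p) Q) (P a)).
Proof.
move=> hp hp' hne HC a u; apply: peval_comm => b _.
by rewrite /vcat; case: ifP => _; [apply: ugens_comm | apply: HC].
Qed.

Lemma commutes_U_gen p p' : (0 < p <= n)%N -> (0 < p' <= n)%N -> p != p' ->
  commutes_U p' (gen_state p).
Proof. by move=> hp hp' hne a u; apply: peval_comm => b _; apply: ugens_comm. Qed.

Lemma tau_state_Lambda p Q : tau_state p Q 3%N = Q 3%N.
Proof. by rewrite /tau_state peval_word /= mulr1. Qed.

Lemma cross_rel_Lambda QA QB : cross_rel QA QB -> QA 3%N * QB 3%N = QB 3%N * QA 3%N.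
Proof.
have rule37 : rule_lookup cross_rules 3 7 = Some [:: (lone, [:: 7%N; 3%N])] by [].
by move/rule_lookupP/(_ rule37); rewrite peval_word /= mulr1.
Qed.

End States.

(** * Lambda_A as a component of a state *)

Lemma path_ltn_le_last a s x : path ltn a s -> x \in a :: s -> (x <= last a s)%N.
Proof.
elim: s a x => [|b s IH] a x /=; first by rewrite inE => _ /eqP ->.
case/andP=> hab Hp; rewrite in_cons => /orP [/eqP ->|]; last exact: IH.
exact: leq_trans (ltnW hab) (IH _ _ Hp (mem_head _ _)).
Qed.

Lemma path_ltn_head_le a s x : path ltn a s -> x \in a :: s -> (a <= x)%N.
Proof.
move=> Hp; rewrite in_cons => /predU1P [->//|Hx].
exact/ltnW/(allP (order_path_min ltn_trans Hp)).
Qed.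

Section LambdaAsState.
Variables (K : fieldType) (q : K) (R : algType K) (e f kk ki : nat -> R).
Hypothesis hq0 : q != 0.
Hypothesis hd : q - q^-1 != 0.

Local Notation delta_state := (delta_state q e f kk ki).
Local Notation tau_state := (tau_state q e f kk ki).
Local Notation gen_state := (gen_state q e f kk ki).

Definition igen_val (Q : nat -> R) (g : igen) : R :=
  match g with
  | iX => ((q - q^-1) ^+ 2)^-1 *: Q 0%N | iF => Q 1%N | iKi => Q 2%N | iL => Q 3%N
  end.

Fixpoint teval_at (r : nat) (Q : igen -> R) (t : term K) : R :=
  match t with
  | tC c => c%:A
  | tAdd a b => teval_at r Q a + teval_at r Q b
  | tMul a b => teval_at r Q a * teval_at r Q b
  | tU p g => ugen_val e f kk ki p g
  | tI p g => if p == r then Q g else teval q e f kk ki (tI p g)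
  end.

Fixpoint only_I_at (p : nat) (t : term K) : bool :=
  match t with
  | tAdd a b | tMul a b => only_I_at p a && only_I_at p b
  | tI p' _ => p' == p
  | _ => true
  end.

Lemma eq_teval_at r (Q1 Q2 : igen -> R) t : Q1 =1 Q2 -> teval_at r Q1 t = teval_at r Q2 t.
Proof. by move=> H; elim: t => //= [a -> b ->|a -> b ->|p g]; rewrite ?H. Qed.

Lemma teval_at_tI r t :
  teval q e f kk ki t = teval_at r (fun g => teval q e f kk ki (tI r g)) t.
Proof. by elim: t => //= [a -> b ->|a -> b ->|p g] //; case: eqP => [->|]. Qed.

Lemma teval_at_subst p r Q phi t : only_I_at p t ->
  teval_at r Q (tsubst p phi t) = teval_at p (fun g => teval_at r Q (phi g)) t.
Proof.
elim: t => //= [a Ha b Hb|a Ha b Hb|p' g]; try by move=> /andP [/Ha -> /Hb ->].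
by move=> /eqP ->; rewrite eqxx.
Qed.

Lemma only_I_at_subst p r phi t : only_I_at p t -> (forall g, only_I_at r (phi g)) ->
  only_I_at r (tsubst p phi t).
Proof.
move=> + Hphi; elim: t => //= [a Ha b Hb|a Ha b Hb|p' g];
  try by move=> /andP [/Ha -> /Hb ->].
by move=> /eqP ->; rewrite eqxx.
Qed.

Lemma only_I_at_delta p g : only_I_at p.+1 (delta_img q p g).
Proof. by case: g; rewrite /= ?eqxx. Qed.

Lemma only_I_at_tau p g : only_I_at p.+1 (tau_img q p g).
Proof. by case: g; rewrite /= ?eqxx. Qed.

Lemma teval_tI p g : teval q e f kk ki (tI p g) = igen_val (gen_state p) g.
Proof.
by case: g; rewrite /igen_val /gen_state /casimir;
  unfold_peval; normalize; match_coefs hq0 hd.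
Qed.

Lemma teval_at_delta_img p Q g :
  teval_at p.+1 (igen_val Q) (delta_img q p g) = igen_val (delta_state p Q) g.
Proof.
by case: g; rewrite /igen_val /delta_state /= ?eqxx;
  unfold_peval; normalize; match_coefs hq0 hd.
Qed.

Lemma teval_at_tau_img p Q g :
  teval_at p.+1 (igen_val Q) (tau_img q p g) = igen_val (tau_state p Q) g.
Proof.
by case: g; rewrite /igen_val /tau_state /= ?eqxx;
  unfold_peval; normalize; match_coefs hq0 hd.
Qed.

Fixpoint tau_iter (p cnt : nat) (Q : nat -> R) : nat -> R :=
  if cnt is cnt'.+1 then tau_state p (tau_iter p.+1 cnt' Q) else Q.

Lemma only_I_at_tau_steps p cnt t : only_I_at p t -> only_I_at (p + cnt) (tau_steps q p cnt t).
Proof.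
elim: cnt p t => [|cnt IH] p t Ht /=; first by rewrite addn0.
by rewrite -addSnnS; apply/IH/only_I_at_subst/only_I_at_tau.
Qed.

Lemma teval_at_tau_steps p cnt t (Q : nat -> R) : only_I_at p t ->
  teval_at (p + cnt) (igen_val Q) (tau_steps q p cnt t) =
  teval_at p (igen_val (tau_iter p cnt Q)) t.
Proof.
elim: cnt p t => [|cnt IH] p t Ht /=; first by rewrite addn0.
rewrite -addSnnS IH; last exact/only_I_at_subst/only_I_at_tau.
by rewrite teval_at_subst //; apply: eq_teval_at => g; apply: teval_at_tau_img.
Qed.

Lemma teval_at_extend p a t (Q : nat -> R) : (p < a)%N -> only_I_at p t ->
  teval_at a (igen_val Q) (extend q p a t) =
  teval_at p (igen_val (delta_state p (tau_iter p.+1 (a - p.+1) Q))) t.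
Proof.
move=> hpa Ht; rewrite /extend -{1}(subnKC hpa).
rewrite teval_at_tau_steps; last exact/only_I_at_subst/only_I_at_delta.
by rewrite teval_at_subst //; apply: eq_teval_at => g; apply: teval_at_delta_img.
Qed.

Lemma only_I_at_extend p a t : (p < a)%N -> only_I_at p t -> only_I_at a (extend q p a t).
Proof.
move=> hpa Ht; rewrite /extend -{1}(subnKC hpa).
exact/only_I_at_tau_steps/only_I_at_subst/only_I_at_delta.
Qed.

(* [state S m c] is the state at position [m - c], positions in [S] being
   expanded by Delta and the others by tau_R. *)
Definition state_step (S : seq nat) p (Q : nat -> R) :=
  if p \in S then delta_state p Q else tau_state p Q.

Fixpoint state (S : seq nat) (m c : nat) : nat -> R :=
  if c is c'.+1 then state_step S (m - c'.+1)%N (state S m c') else gen_state m.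

Lemma state_tau_run S m b k : (k <= b)%N -> (b <= m)%N ->
  (forall j, (0 < j <= k)%N -> (b - j)%N \notin S) ->
  state S m (m - b + k) = tau_iter (b - k) k (state S m (m - b)).
Proof.
move=> hkb hbm; elim: k hkb => [|k IH] hk HS; first by rewrite addn0 subn0.
rewrite addnS /= (IH (ltnW hk)); last by move=> j /andP [j0 jk]; apply: HS; rewrite j0 ltnW.
have -> : (m - (m - b + k).+1 = b - k.+1)%N by lia.
rewrite /state_step (negbTE (HS k.+1 _)) ?leqnn //.
by have -> : ((b - k.+1).+1 = b - k)%N by lia.
Qed.

Definition Lambda_val a s := state (a :: s) (last a s) (last a s - a) 3%N.

Lemma lam_aux_state S m a s' t : path ltn a s' -> last a s' = m ->
  (forall x, (a <= x < m)%N -> (x \in S) = (x \in a :: s')) -> only_I_at a t ->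
  teval q e f kk ki (lam_aux q a s' t) = teval_at a (igen_val (state S m (m - a))) t.
Proof.
elim: s' a t => [|b s'' IH] a t /= Hp Hm HS Ht.
  rewrite -Hm subnn /= (teval_at_tI a); apply: eq_teval_at => g; exact: teval_tI.
case/andP: Hp => hab Hp.
have hbm : (b <= m)%N by rewrite -Hm; apply: path_ltn_le_last Hp _; rewrite mem_head.
rewrite (IH b) //; first last.
- exact: only_I_at_extend.
- move=> x /andP [hbx hxm]; rewrite HS; last by rewrite (leq_trans (ltnW hab)).
  by rewrite in_cons; have -> : (x == a) = false by apply/eqP; lia.
rewrite teval_at_extend //.
have Hma : (m - a = (m - b + (b - a.+1)).+1)%N by lia.
have HS2 : forall j, (0 < j <= b - a.+1)%N -> (b - j)%N \notin S.
  move=> j /andP [j0 jk]; rewrite HS; last by lia.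
  by apply/negP; rewrite in_cons => /predU1P [|/(path_ltn_head_le Hp)]; lia.
have hk1 : (b - a.+1 <= b)%N by lia.
rewrite Hma /= (state_tau_run hk1 hbm HS2).
have -> : (m - (m - b + (b - a.+1)).+1 = a)%N by lia.
have -> : (b - (b - a.+1) = a.+1)%N by lia.
rewrite /state_step HS ?in_cons ?eqxx //; lia.
Qed.

End LambdaAsState.

(** * Commutation *)

Section Invariants.
Variables (K : fieldType) (q : K) (R : algType K) (e f kk ki : nat -> R) (n : nat).
Hypothesis hq0 : q != 0.
Hypothesis hd : q - q^-1 != 0.
Hypothesis hrel : uq_tensor_rels q e f kk ki n.

Local Notation state := (state q e f kk ki).
Local Notation Lambda_val := (Lambda_val q e f kk ki).
Local Notation state_step := (state_step q e f kk ki).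
Local Notation IR_rel := (IR_rel q).
Local Notation cross_rel := (cross_rel q).
Local Notation commutes_U := (commutes_U q e f kk ki).

Lemma stateS S m r : (0 < r < m)%N ->
  state S m (m - r) = state_step S r (state S m (m - r.+1)).
Proof.
move=> /andP [r0 rm]; have -> : (m - r = (m - r.+1).+1)%N by lia.
by rewrite /=; have -> : (m - (m - r.+1).+1 = r)%N by lia.
Qed.

Lemma state_IR_commutes S m c : (0 < m <= n)%N -> (c < m)%N ->
  IR_rel (state S m c) /\ forall p, (0 < p < m - c)%N -> commutes_U p (state S m c).
Proof.
move=> hm; elim: c => [|c IH] hc /=.
  split; first exact (gen_state_IR hq0 hd hrel hm).
  by move=> p hp; apply: (commutes_U_gen hrel hm); [lia | apply/eqP; lia].
have [HI HC] := IH (ltnW hc).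
have hp : (0 < m - c.+1 <= n)%N by lia.
have HCp : commutes_U (m - c.+1) (state S m c) by apply: HC; lia.
rewrite /state_step; case: ifP => _; split;
  [ exact (delta_state_IR hq0 hd hrel hp HI HCp) |
  | exact (tau_state_IR hq0 hd hrel hp HI HCp) | ];
  by move=> p' hp'; apply: (commutes_U_step hrel _ hp); [lia | apply/eqP; lia | apply: HC; lia].
Qed.

Lemma state_Lambda_below_min S m a r : (0 < r <= a)%N -> (a <= m)%N ->
  (forall x, (x < a)%N -> x \notin S) -> state S m (m - r) 3%N = state S m (m - a) 3%N.
Proof.
move=> /andP [r0 ra] ham HS; elim: a ra ham HS => [|a IH] ra ham HS; first by lia.
case: (ltnP r a.+1) => hr; last by have -> : r = a.+1 by lia.
rewrite IH; [|lia|lia|by move=> x hx; apply: HS; lia].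
rewrite stateS; last lia.
by rewrite /state_step (negbTE (HS a (ltnSn a))) tau_state_Lambda.
Qed.

Lemma state_cross_rel_start SA SB mA mB : (0 < mB <= mA)%N -> (mA <= n)%N -> mB \in SA ->
  cross_rel (state SA mA (mA - mB)) (state SB mB 0).
Proof.
move=> hm hAn hmB; have hvA : (0 < mA <= n)%N by lia.
have hvB : (0 < mB <= n)%N by lia.
case: (ltnP mB mA) => hlt; last first.
  have -> : mA = mB by lia.
  by rewrite subnn; exact (cross_rel_gen_gen hq0 hd hrel hvB).
have hc : (mA - mB.+1 < mA)%N by lia.
have [HI HC] := state_IR_commutes SA hvA hc.
rewrite stateS /state_step ?hmB; last lia.
by apply: (cross_rel_delta_gen hq0 hd hrel hvB HI); apply: HC; lia.
Qed.

Lemma state_cross_rel SA SB mA mB c : (0 < mB <= mA)%N -> (mA <= n)%N -> mB \in SA ->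
  {subset SB <= SA} -> (c < mB)%N ->
  cross_rel (state SA mA (mA - (mB - c))) (state SB mB (mB - (mB - c))).
Proof.
move=> hm hAn hmB Hsub; elim: c => [|c IH] hc.
  by rewrite !subn0 subnn; apply: state_cross_rel_start.
have hvA : (0 < mA <= n)%N by lia.
have hvB : (0 < mB <= n)%N by lia.
set r := (mB - c.+1)%N; have hr : (0 < r <= n)%N by lia.
have hrA : (0 < r < mA)%N by lia.
have hrB : (0 < r < mB)%N by lia.
have HAB : cross_rel (state SA mA (mA - r.+1)) (state SB mB (mB - r.+1)).
  by have := IH (ltnW hc); have -> : (mB - c = r.+1)%N by lia.
have hcA : (mA - r.+1 < mA)%N by lia.
have hcB : (mB - r.+1 < mB)%N by lia.
have [HIA /(_ r) HCA] := state_IR_commutes SA hvA hcA.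
have [HIB /(_ r) HCB] := state_IR_commutes SB hvB hcB.
have {}HCA : commutes_U r (state SA mA (mA - r.+1)) by apply: HCA; lia.
have {}HCB : commutes_U r (state SB mB (mB - r.+1)) by apply: HCB; lia.
rewrite (stateS SA hrA) (stateS SB hrB) /state_step; case: ifP => HrA; case: ifP => HrB.
- exact (cross_rel_delta_delta hq0 hd hrel hr HIA HIB HAB HCA HCB).
- exact (cross_rel_delta_tau hq0 hd hrel hr HIA HIB HAB HCA HCB).
- by rewrite (Hsub r HrB) in HrA.
- exact (cross_rel_tau_tau hq0 hd hrel hr HIA HIB HAB HCA HCB).
Qed.

Lemma Lambda_val_comm aA sA aB sB : path ltn aA sA -> path ltn aB sB ->
  {subset aB :: sB <= aA :: sA} -> {in aA :: sA, forall x, 0 < x <= n}%N ->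
  Lambda_val aA sA * Lambda_val aB sB = Lambda_val aB sB * Lambda_val aA sA.
Proof.
move=> HpA HpB Hsub Hpos; rewrite /Lambda_val; set mA := last aA sA; set mB := last aB sB.
have hmBA : mB \in aA :: sA by apply/Hsub/mem_last.
have hBA : (mB <= mA)%N by apply: path_ltn_le_last.
have hAn : (mA <= n)%N by have := Hpos mA (mem_last _ _); lia.
have hB0 : (0 < mB)%N by have := Hpos mB hmBA; lia.
have hA1 : (0 < 1 <= aA)%N by have := Hpos aA (mem_head _ _); lia.
have hB1 : (0 < 1 <= aB)%N by have := Hpos aB (Hsub _ (mem_head _ _)); lia.
have below_min a s : path ltn a s -> forall x, (x < a)%N -> x \notin a :: s.
  by move=> Hp x hxa; apply/negP => /(path_ltn_head_le Hp); lia.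
have hm : (0 < mB <= mA)%N by lia.
have hc : (mB.-1 < mB)%N by lia.
have LA := state_Lambda_below_min hA1 (path_ltn_le_last HpA (mem_head _ _)) (below_min _ _ HpA).
have LB := state_Lambda_below_min hB1 (path_ltn_le_last HpB (mem_head _ _)) (below_min _ _ HpB).
move: (cross_rel_Lambda (state_cross_rel hm hAn hmBA Hsub hc)).
have -> : (mB - mB.-1 = 1)%N by lia.
by rewrite LA LB.
Qed.

End Invariants.

Definition positions n (A : {set 'I_n}) := sort leq [seq (val x).+1 | x <- enum A].

Lemma positions_sorted n (A : {set 'I_n}) : sorted ltn (positions A).
Proof.
rewrite ltn_sorted_uniq_leq sort_uniq sort_sorted ?andbT; last exact: leq_total.
by rewrite map_inj_uniq ?enum_uniq // => x y [] /val_inj.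
Qed.

Lemma mem_positions n (A : {set 'I_n}) x :
  (x \in positions A) = [exists i in A, x == (val i).+1].
Proof.
rewrite mem_sort; apply/mapP/existsP => [[i Hi ->]|[i /andP [Hi /eqP ->]]].
  by exists i; rewrite -mem_enum Hi eqxx.
by exists i; rewrite ?mem_enum.
Qed.

Section LambdaA.
Variables (K : fieldType) (q : K) (R : algType K) (e f kk ki : nat -> R) (n : nat).
Hypothesis hq0 : q != 0.
Hypothesis hd : q - q^-1 != 0.

Lemma LambdaA_state (A : {set 'I_n}) a s : positions A = a :: s ->
  LambdaA q e f kk ki A = Lambda_val q e f kk ki a s.
Proof.
move=> Hs; have Hp : path ltn a s by have := positions_sorted A; rewrite Hs.
rewrite /LambdaA -/(positions A) Hs /=.
by rewrite (lam_aux_state e f kk ki hq0 hd (S := a :: s) Hp (erefl _)) //= eqxx.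
Qed.

Theorem LambdaA_comm_subset (A B : {set 'I_n}) : uq_tensor_rels q e f kk ki n -> B \subset A ->
  LambdaA q e f kk ki A * LambdaA q e f kk ki B = LambdaA q e f kk ki B * LambdaA q e f kk ki A.
Proof.
move=> hrel HBA.
case EB: (positions B) => [|aB sB].
  by rewrite /LambdaA -/(positions B) EB /= mulr_algl mulr_algr.
case EA: (positions A) => [|aA sA].
  by rewrite /LambdaA -/(positions A) EA /= mulr_algl mulr_algr.
rewrite (LambdaA_state EA) (LambdaA_state EB).
apply: (Lambda_val_comm hq0 hd hrel).
- by have := positions_sorted A; rewrite EA.
- by have := positions_sorted B; rewrite EB.
- move=> x; rewrite -EA -EB !mem_positions => /existsP [i /andP [Hi Hx]].
  by apply/existsP; exists i; rewrite (subsetP HBA _ Hi).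
- move=> x; rewrite -EA mem_positions => /existsP [i /andP [_ /eqP ->]].
  by rewrite ltn0Sn /= ltn_ord.
Qed.

End LambdaA.

Unset Implicit Arguments. Set Strict Implicit.

Theorem proposition5p9 (K : fieldType) (q : K)
  (hq0 : q != 0) (hq : forall m : nat, (0 < m)%N -> q ^+ m != 1)
  (k n : nat) (i j : nat -> nat)
  (hk : (3 <= k)%N) (hj1 : (1 <= j 1)%N)
  (hij : forall m : nat, (2 <= m <= k)%N -> (i m <= j m)%N)
  (hsep : forall m : nat, (1 <= m < k)%N -> (j m < i m.+1 - 1)%N)
  (hn : (j k <= n)%N)
  (B : {set 'I_n})
  (hB1 : \bigcup_(2 <= m < k) ivl n (i m) (j m) \subset B)
  (hB2 : B \subset setA n k i j)
  (R : algType K) (e f kk ki : nat -> R)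
  (hrel : uq_tensor_rels q e f kk ki n) :
  LambdaA q e f kk ki (setA n k i j) * LambdaA q e f kk ki B =
  LambdaA q e f kk ki B * LambdaA q e f kk ki (setA n k i j).
Proof. exact: LambdaA_comm_subset hq0 (subr_inv_neq0 hq0 (hq 2%N isT)) _ _ hrel hB2. Qed.
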